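(* Let $\lambda\in\mathbb{C}$ and $n,k\in\mathbb{N}_0$. Then $$\int_{0}^{1}y_{3}(n,k;\lambda;1,x)\,dx=\frac{1}{n+1}\sum_{m=0}^{n}k^{m}\,y_{1}(n-m,k;\lambda),$$ or equivalently $$\int_{0}^{1}y_{3}(n,k;\lambda;1,x)\,dx=\frac{1}{(n+1)k!}\sum_{j=0}^{k}\binom{k}{j}\lambda^{j}\sum_{m=0}^{n}k^{m}j^{n-m}.$$
   Context: For $a,b\in\mathbb{R}$, $\lambda\in\mathbb{C}$ and $k\in\mathbb{N}_0$: the numbers $y_3(n,k;\lambda;a,b)$ are defined by $\frac{e^{bkt}}{k!}(\lambda e^{(a-b)t}+1)^{k}=\sum_{n\ge0}y_{3}(n,k;\lambda;a,b)\frac{t^{n}}{n!}$ (so $y_3(n,k;\lambda;1,x)$ is a polynomial in $x$), and the numbers $y_1(n,k;\lambda)$ by $\frac{1}{k!}(\lambda e^{t}+1)^{k}=\sum_{n\ge0}y_{1}(n,k;\lambda)\frac{t^{n}}{n!}$. Convention: $0^0=1$. *)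

From Stdlib Require Import Reals Factorial.
From Coquelicot Require Import Coquelicot.
Open Scope R_scope.

Definition egf (c : nat -> C) (F : R -> C) : Prop :=
  forall t : R, is_series (fun n => Cmult (RtoC (t ^ n / INR (fact n))) (c n)) (F t).

Definition gen_y3 (k : nat) (lam : C) (a b : R) (t : R) : C :=
  Cmult (RtoC (exp (b * INR k * t) / INR (fact k)))
        (Cpow (Cplus (Cmult lam (RtoC (exp ((a - b) * t)))) (RtoC 1)) k).

Definition gen_y1 (k : nat) (lam : C) (t : R) : C :=
  Cmult (RtoC (/ INR (fact k)))
        (Cpow (Cplus (Cmult lam (RtoC (exp t))) (RtoC 1)) k).

Definition Csum (f : nat -> C) (N : nat) : C := @sum_n C_Ring f N.

Definition CRInt (f : R -> C) (a b : R) : C := @RInt C_R_CompleteNormedModule f a b.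

From Stdlib Require Import Reals Factorial Lia Lra.
From Coquelicot Require Import Coquelicot.
Open Scope R_scope.

(* With [w_j = C(k,j) lam^j / k!], the binomial theorem writes both generating
   functions as finite sums of exponentials:
     gen_y3 k lam 1 x t = sum_j w_j e^((x k + j (1 - x)) t),   gen_y1 k lam t = sum_j w_j e^(j t).
   Uniqueness of exponential generating functions then gives
     y3(n,k;lam;1,x) = sum_j w_j (x k + j (1 - x))^n   and   y1(n,k;lam) = sum_j w_j j^n,
   and the theorem follows from
     int_0^1 (x k + (1 - x) j)^n dx = (1/(n+1)) sum_{m<=n} k^m j^(n-m),
   the latter being (k^(n+1) - j^(n+1)) / ((n+1) (k - j)) when k <> j. *)

Lemma Csum_O (f : nat -> C) : Csum f 0 = f 0%nat.
Proof. exact (sum_O f). Qed.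

Lemma Csum_Sn (f : nat -> C) N : Csum f (S N) = (Csum f N + f (S N))%C.
Proof. exact (sum_Sn f N). Qed.

Lemma Csum_shift (f : nat -> C) N :
  Csum f (S N) = (f 0%nat + Csum (fun j => f (S j)) N)%C.
Proof. unfold Csum, sum_n. rewrite sum_Sn_m, sum_n_m_S by lia. reflexivity. Qed.

Lemma Csum_ext_loc (f g : nat -> C) N :
  (forall j, (j <= N)%nat -> f j = g j) -> Csum f N = Csum g N.
Proof. exact (sum_n_ext_loc f g N). Qed.

Lemma Csum_ext (f g : nat -> C) N : (forall j, f j = g j) -> Csum f N = Csum g N.
Proof. intros H. apply Csum_ext_loc. auto. Qed.

Lemma Csum_plus (f g : nat -> C) N :
  Csum (fun j => f j + g j)%C N = (Csum f N + Csum g N)%C.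
Proof. exact (sum_n_plus f g N). Qed.

Lemma Csum_mult_l (a : C) (f : nat -> C) N :
  Csum (fun j => a * f j)%C N = (a * Csum f N)%C.
Proof. exact (sum_n_mult_l a f N). Qed.

Lemma Csum_switch (f : nat -> nat -> C) M N :
  Csum (fun i => Csum (f i) N) M = Csum (fun j => Csum (fun i => f i j) M) N.
Proof. exact (sum_n_switch f M N). Qed.

Lemma RtoC_sum_f_R0 (f : nat -> R) N : RtoC (sum_f_R0 f N) = Csum (fun n => RtoC (f n)) N.
Proof.
  induction N as [|N IH]; [now rewrite Csum_O|].
  rewrite Csum_Sn, <- IH. apply RtoC_plus.
Qed.

Lemma Re_sum_n (f : nat -> C) N : Re (sum_n f N) = sum_n (fun n => Re (f n)) N.
Proof.
  induction N as [|N IH]; [now rewrite !sum_O|].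
  now rewrite !sum_Sn, <- IH.
Qed.

Lemma Im_sum_n (f : nat -> C) N : Im (sum_n f N) = sum_n (fun n => Im (f n)) N.
Proof.
  induction N as [|N IH]; [now rewrite !sum_O|].
  now rewrite !sum_Sn, <- IH.
Qed.

Lemma RtoC_sum_n (f : nat -> R) N : RtoC (sum_n f N) = sum_n (fun n => RtoC (f n)) N.
Proof.
  induction N as [|N IH]; [now rewrite !sum_O|].
  rewrite !sum_Sn, <- IH. apply RtoC_plus.
Qed.

Lemma is_series_Re (f : nat -> C) l :
  is_series f l -> is_series (fun n => Re (f n)) (Re l).
Proof.
  intros H. apply filterlim_locally. intros eps.
  generalize (proj1 (filterlim_locally _ _) H eps). apply filter_imp.
  intros N [HRe _]. rewrite <- Re_sum_n. exact HRe.
Qed.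

Lemma is_series_Im (f : nat -> C) l :
  is_series f l -> is_series (fun n => Im (f n)) (Im l).
Proof.
  intros H. apply filterlim_locally. intros eps.
  generalize (proj1 (filterlim_locally _ _) H eps). apply filter_imp.
  intros N [_ HIm]. rewrite <- Im_sum_n. exact HIm.
Qed.

Lemma is_series_RtoC (f : nat -> R) l :
  is_series f l -> is_series (fun n => RtoC (f n)) (RtoC l).
Proof.
  intros H. apply filterlim_locally. intros eps.
  generalize (proj1 (filterlim_locally _ _) H eps). apply filter_imp.
  intros N HN. rewrite <- RtoC_sum_n. split; [exact HN|apply ball_center].
Qed.

Lemma exp_series_coef_eq0 (a : nat -> R) :
  (forall t, is_series (fun n => t ^ n / INR (fact n) * a n) 0) ->
  forall n, a n = 0.
Proof.
  intros H n.
  set (b m := a m / INR (fact m)).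
  assert (Hb : forall t, is_pseries b t 0).
  { intros t. eapply is_series_ext; [|apply (H t)]. intros m.
    rewrite pow_n_pow. unfold b, scal; simpl. unfold mult; simpl.
    field. apply INR_fact_neq_0. }
  (* The series converges at 1, so the radius is positive and the coefficients
     of [PSeries b = 0] are its derivatives at 0. *)
  assert (HR : Rbar_lt 0 (CV_radius b)).
  { destruct (Rbar_lt_dec (CV_radius b) (Rabs 1)) as [Hlt|Hge].
    - exfalso. apply (CV_disk_outside b 1 Hlt).
      eapply is_lim_seq_ext; [|apply ex_series_lim_0; exists 0; apply (Hb 1)].
      intros m. simpl. rewrite pow_n_pow, pow1. unfold scal; simpl. unfold mult; simpl. ring.
    - rewrite Rabs_R1 in Hge. destruct (CV_radius b); simpl in *; lra. }
  generalize (Derive_n_coef b n HR).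
  rewrite (Derive_n_ext _ (fun _ => 0) n 0 (fun t => is_pseries_unique _ _ _ (Hb t))).
  replace (Derive_n (fun _ : R => 0) n 0) with 0 by (destruct n; [|rewrite Derive_n_const]; reflexivity).
  unfold b. intros E. field_simplify in E; [lra|apply INR_fact_neq_0].
Qed.

Lemma egf_zero (c : nat -> C) : egf c (fun _ => RtoC 0) -> forall n, c n = RtoC 0.
Proof.
  intros H n. apply injective_projections; simpl.
  - apply (exp_series_coef_eq0 (fun m => Re (c m))). intros t.
    eapply is_series_ext; [|apply (is_series_Re _ _ (H t))].
    intros m. apply re_scal_l.
  - apply (exp_series_coef_eq0 (fun m => Im (c m))). intros t.
    eapply is_series_ext; [|apply (is_series_Im _ _ (H t))].
    intros m. apply im_scal_l.
Qed.

Lemma egf_unique (c d : nat -> C) (F : R -> C) :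
  egf c F -> egf d F -> forall n, c n = d n.
Proof.
  intros Hc Hd n.
  assert (Hcd : egf (fun m => (c m - d m)%C) (fun _ => RtoC 0)).
  { intros t. replace (RtoC 0) with (minus (F t) (F t)) by (apply (Ceq_minus (F t)); reflexivity).
    eapply is_series_ext; [|apply (is_series_minus _ _ _ _ (Hc t) (Hd t))].
    intros m. unfold minus, plus, opp; simpl. ring. }
  apply Ceq_minus, (egf_zero _ Hcd).
Qed.

Lemma egf_exp (w : C) (r : R) :
  egf (fun n => (w * RtoC (r ^ n))%C) (fun t => (w * RtoC (exp (r * t)))%C).
Proof.
  intros t.
  assert (H := is_series_scal w _ _ (is_series_RtoC _ _ (is_exp_Reals (r * t)))).
  eapply is_series_ext; [|exact H].
  intros n. rewrite pow_n_pow, Rpow_mult_distr. unfold scal; simpl. unfold mult; simpl.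
  unfold Rdiv. rewrite !RtoC_mult. ring.
Qed.

Lemma egf_Csum (c : nat -> nat -> C) (F : nat -> R -> C) K :
  (forall j, egf (c j) (F j)) ->
  egf (fun n => Csum (fun j => c j n) K) (fun t => Csum (fun j => F j t) K).
Proof.
  intros H t. induction K as [|K IH].
  - rewrite Csum_O. eapply is_series_ext; [|apply (H 0%nat t)].
    intros n. now rewrite Csum_O.
  - rewrite Csum_Sn. eapply is_series_ext; [|exact (is_series_plus _ _ _ _ IH (H (S K) t))].
    intros n. rewrite Csum_Sn. symmetry. apply Cmult_plus_distr_l.
Qed.

Lemma egf_coef_sum_exp (c : nat -> C) (F : R -> C) (w : nat -> C) (r : nat -> R) K :
  egf c F ->
  (forall t, F t = Csum (fun j => w j * RtoC (exp (r j * t)))%C K) ->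
  forall n, c n = Csum (fun j => w j * RtoC (r j ^ n))%C K.
Proof.
  intros Hc HF n. symmetry.
  apply (egf_unique (fun m => Csum (fun j => w j * RtoC (r j ^ m))%C K) c F); [|exact Hc].
  intros t. rewrite HF.
  exact (egf_Csum (fun j m => w j * RtoC (r j ^ m))%C
           (fun j s => w j * RtoC (exp (r j * s)))%C K
           (fun j => egf_exp (w j) (r j)) t).
Qed.

(* Pascal's triangle, extended by zeros: unlike [Binomial.C n j], which is junk
   for [j > n], it vanishes there, so the binomial theorem needs no range side
   conditions. *)
Fixpoint binom (n j : nat) : R :=
  match j with
  | O => 1
  | S j' => match n with O => 0 | S n' => binom n' j' + binom n' j end
  end.

Lemma binom_n0 n : binom n 0 = 1.
Proof. now destruct n. Qed.

Lemma binom_gt n j : (n < j)%nat -> binom n j = 0.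
Proof.
  revert j; induction n as [|n IH]; intros [|j] Hj; simpl; try lia; [reflexivity|].
  rewrite !IH by lia. ring.
Qed.

Lemma binom_C n j : (j <= n)%nat -> binom n j = Binomial.C n j.
Proof.
  revert j; induction n as [|n IH]; intros [|j] Hj; try lia.
  1-2: now rewrite C_n_0.
  - simpl binom. destruct (Nat.eq_dec j n) as [->|Hjn].
    + rewrite (binom_gt n (S n)), IH, !C_n_n by lia. ring.
    + rewrite !IH by lia. apply pascal. lia.
Qed.

Lemma Cpow_add1 (z : C) k :
  Cpow (z + RtoC 1) k = Csum (fun j => RtoC (binom k j) * Cpow z j)%C k.
Proof.
  induction k as [|k IH]; [rewrite Csum_O; simpl; ring|].
  set (T := Csum (fun j => RtoC (binom k (S j)) * Cpow z (S j))%C k).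
  assert (HT : Csum (fun j => RtoC (binom k j) * Cpow z j)%C k = (RtoC 1 + T)%C).
  { transitivity (Csum (fun j => RtoC (binom k j) * Cpow z j)%C (S k)).
    - rewrite Csum_Sn, (binom_gt k (S k)) by lia. ring.
    - rewrite Csum_shift, binom_n0. cbv beta. fold T. ring. }
  assert (HS : Csum (fun j => RtoC (binom (S k) (S j)) * Cpow z (S j))%C k
               = (z * Csum (fun j => RtoC (binom k j) * Cpow z j)%C k + T)%C).
  { unfold T. rewrite <- Csum_mult_l, <- Csum_plus. apply Csum_ext. intros j.
    simpl binom. rewrite RtoC_plus, Cpow_S. ring. }
  rewrite Cpow_S, IH, Csum_shift. cbv beta. rewrite HS, HT, binom_n0. ring.
Qed.

Definition binom_weight (k : nat) (lam : C) (j : nat) : C :=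
  (RtoC (binom k j / INR (fact k)) * Cpow lam j)%C.

Lemma pow_exp (s : R) j : exp s ^ j = exp (INR j * s).
Proof.
  induction j as [|j IH]; [simpl; now rewrite Rmult_0_l, exp_0|].
  rewrite S_INR, <- tech_pow_Rmult, IH, <- exp_plus. f_equal. ring.
Qed.

Lemma Cpow_exp_add1 (lam : C) (s : R) k :
  Cpow (lam * RtoC (exp s) + RtoC 1) k
  = Csum (fun j => RtoC (binom k j) * Cpow lam j * RtoC (exp (INR j * s)))%C k.
Proof.
  rewrite Cpow_add1. apply Csum_ext. intros j.
  rewrite Cpow_mult_l, <- RtoC_pow, pow_exp. ring.
Qed.

Lemma gen_y3_sum_exp k lam a b t :
  gen_y3 k lam a b t
  = Csum (fun j => binom_weight k lam j * RtoC (exp ((b * INR k + INR j * (a - b)) * t)))%C k.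
Proof.
  unfold gen_y3. rewrite Cpow_exp_add1, <- Csum_mult_l. apply Csum_ext. intros j.
  replace ((b * INR k + INR j * (a - b)) * t) with (b * INR k * t + INR j * ((a - b) * t)) by ring.
  unfold binom_weight, Rdiv. rewrite exp_plus, !RtoC_mult. ring.
Qed.

Lemma gen_y1_sum_exp k lam t :
  gen_y1 k lam t = Csum (fun j => binom_weight k lam j * RtoC (exp (INR j * t)))%C k.
Proof.
  unfold gen_y1. rewrite Cpow_exp_add1, <- Csum_mult_l. apply Csum_ext. intros j.
  unfold binom_weight, Rdiv. rewrite !RtoC_mult. ring.
Qed.

Lemma sub_mul_sum_pow (a b : R) n :
  (a - b) * sum_f_R0 (fun m => a ^ m * b ^ (n - m)) n = a ^ S n - b ^ S n.
Proof.
  induction n as [|n IH]; [simpl; ring|].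
  rewrite tech5, Nat.sub_diag.
  rewrite (sum_eq _ (fun m => a ^ m * b ^ (n - m) * b)).
  2:{ intros m Hm. replace (S n - m)%nat with (S (n - m)) by lia. simpl. ring. }
  rewrite <- scal_sum.
  transitivity (b * ((a - b) * sum_f_R0 (fun m => a ^ m * b ^ (n - m)) n) + (a - b) * a ^ S n);
    [ring | rewrite IH; simpl; ring].
Qed.

Lemma is_RInt_affine_pow (a b : R) n :
  is_RInt (fun x => (x * a + b * (1 - x)) ^ n) 0 1
    (sum_f_R0 (fun m => a ^ m * b ^ (n - m)) n / INR (n + 1)).
Proof.
  assert (Hn : INR (n + 1) <> 0) by (apply not_0_INR; lia).
  destruct (Req_dec a b) as [<-|Hab].
  - assert (Hsum : sum_f_R0 (fun m => a ^ m * a ^ (n - m)) n = INR (n + 1) * a ^ n).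
    { rewrite (sum_eq _ (fun _ => a ^ n)) by (intros m Hm; rewrite <- pow_add; f_equal; lia).
      rewrite sum_cte, Nat.add_1_r. ring. }
    apply (is_RInt_ext (fun _ => a ^ n)); [intros x _; f_equal; ring|].
    rewrite Hsum. replace (INR (n + 1) * a ^ n / INR (n + 1)) with (scal (1 - 0) (a ^ n)).
    + apply (@is_RInt_const R_NormedModule).
    + unfold scal; simpl; unfold mult; simpl. field. exact Hn.
  - set (F x := (x * a + b * (1 - x)) ^ S n / (INR (n + 1) * (a - b))).
    replace (sum_f_R0 _ n / INR (n + 1)) with (minus (F 1) (F 0)).
    + apply (is_RInt_derive F).
      * intros x _. unfold F. auto_derive; [trivial|].
        change (match n with 0%nat => 1 | S _ => INR n + 1 end) with (INR (S n)).
        rewrite Nat.add_1_r in *. replace (1 + - x) with (1 - x) by ring. field. split; [lra|exact Hn].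
      * intros x _. apply (@ex_derive_continuous R_AbsRing R_NormedModule). unfold F. auto_derive. trivial.
    + assert (Hgeo := sub_mul_sum_pow a b n). simpl in Hgeo.
      unfold F, minus, plus, opp; simpl.
      replace (1 * a + b * (1 - 1)) with a by ring.
      replace (0 * a + b * (1 - 0)) with b by ring.
      replace (sum_f_R0 _ n) with ((a * a ^ n - b * b ^ n) / (a - b))
        by (rewrite <- Hgeo; field; lra).
      field. split; [lra|exact Hn].
Qed.

Lemma is_RInt_Cmult_RtoC (w : C) (p : R -> R) (a b v : R) :
  is_RInt p a b v ->
  @is_RInt C_R_CompleteNormedModule (fun x => w * RtoC (p x))%C a b (w * RtoC v)%C.
Proof.
  intros Hp.
  apply (@is_RInt_fct_extend_pair R_NormedModule R_NormedModule
           (fun x => w * RtoC (p x))%C a b (fst (w * RtoC v)%C) (snd (w * RtoC v)%C)); simpl.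
  - assert (H := is_RInt_scal p a b (fst w) v Hp).
    replace (fst w * v - snd w * 0) with (scal (fst w) v) by (unfold scal; simpl; unfold mult; simpl; ring).
    eapply is_RInt_ext; [|exact H].
    intros x _. unfold scal; simpl; unfold mult; simpl. ring.
  - assert (H := is_RInt_scal p a b (snd w) v Hp).
    replace (fst w * 0 + snd w * v) with (scal (snd w) v) by (unfold scal; simpl; unfold mult; simpl; ring).
    eapply is_RInt_ext; [|exact H].
    intros x _. unfold scal; simpl; unfold mult; simpl. ring.
Qed.

Lemma is_RInt_Csum (f : nat -> R -> C) (l : nat -> C) (a b : R) K :
  (forall j, @is_RInt C_R_CompleteNormedModule (f j) a b (l j)) ->
  @is_RInt C_R_CompleteNormedModule (fun x => Csum (fun j => f j x) K) a b (Csum l K).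
Proof.
  intros H. induction K as [|K IH].
  - rewrite Csum_O. eapply is_RInt_ext; [|exact (H 0%nat)].
    intros x _. now rewrite Csum_O.
  - rewrite Csum_Sn. eapply is_RInt_ext; [|exact (is_RInt_plus _ _ _ _ _ _ IH (H (S K)))].
    intros x _. now rewrite Csum_Sn.
Qed.

Section GeneratingFunctions.

Variables (k : nat) (lam : C).

Lemma y3_eq_Csum (y3 : nat -> R -> C)
  (Hy3 : forall x, egf (fun m => y3 m x) (gen_y3 k lam 1 x)) n x :
  y3 n x = Csum (fun j => binom_weight k lam j * RtoC ((x * INR k + INR j * (1 - x)) ^ n))%C k.
Proof.
  apply (egf_coef_sum_exp _ _ _ (fun j => x * INR k + INR j * (1 - x)) k (Hy3 x)).
  intros t. apply gen_y3_sum_exp.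
Qed.

Lemma y1_eq_Csum (y1 : nat -> C) (Hy1 : egf y1 (gen_y1 k lam)) n :
  y1 n = Csum (fun j => binom_weight k lam j * RtoC (INR j ^ n))%C k.
Proof.
  apply (egf_coef_sum_exp _ _ _ INR k Hy1). apply gen_y1_sum_exp.
Qed.

Lemma CRInt_y3 (y3 : nat -> R -> C)
  (Hy3 : forall x, egf (fun m => y3 m x) (gen_y3 k lam 1 x)) n :
  CRInt (fun x => y3 n x) 0 1
  = Csum (fun j => binom_weight k lam j
                   * RtoC (sum_f_R0 (fun m => INR k ^ m * INR j ^ (n - m))%R n / INR (n + 1)))%C k.
Proof.
  unfold CRInt. apply (@is_RInt_unique C_R_CompleteNormedModule).
  eapply is_RInt_ext; [intros x _; symmetry; exact (y3_eq_Csum y3 Hy3 n x)|].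
  apply is_RInt_Csum. intros j. apply is_RInt_Cmult_RtoC, is_RInt_affine_pow.
Qed.

Lemma Csum_pow_y1 (y1 : nat -> C) (Hy1 : egf y1 (gen_y1 k lam)) n :
  Csum (fun m => RtoC (INR k ^ m) * y1 (n - m)%nat)%C n
  = Csum (fun j => binom_weight k lam j
                   * RtoC (sum_f_R0 (fun m => INR k ^ m * INR j ^ (n - m))%R n))%C k.
Proof.
  rewrite (Csum_ext _ (fun m => Csum (fun j => RtoC (INR k ^ m)
                                  * (binom_weight k lam j * RtoC (INR j ^ (n - m))))%C k)).
  2:{ intros m. now rewrite (y1_eq_Csum y1 Hy1), Csum_mult_l. }
  rewrite Csum_switch. apply Csum_ext. intros j.
  rewrite RtoC_sum_f_R0, <- Csum_mult_l. apply Csum_ext. intros m.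
  rewrite RtoC_mult. ring.
Qed.

End GeneratingFunctions.

Theorem mainTheorem5 (lam : C) (n k : nat)
  (y3 : nat -> R -> C) (y1 : nat -> C)
  (Hy3 : forall x : R, egf (fun m => y3 m x) (gen_y3 k lam 1 x))
  (Hy1 : egf y1 (gen_y1 k lam)) :
  CRInt (fun x => y3 n x) 0 1
    = Cmult (RtoC (/ INR (n + 1)))
            (Csum (fun m => Cmult (RtoC (INR k ^ m)) (y1 (n - m)%nat)) n)
  /\
  CRInt (fun x => y3 n x) 0 1
    = Cmult (RtoC (/ (INR (n + 1) * INR (fact k))))
            (Csum (fun j => Cmult (Cmult (RtoC (Binomial.C k j)) (Cpow lam j))
                     (RtoC (sum_f_R0 (fun m => INR k ^ m * INR j ^ (n - m)) n))) k).
Proof.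
  rewrite (CRInt_y3 k lam y3 Hy3 n). split.
  - rewrite (Csum_pow_y1 k lam y1 Hy1), <- Csum_mult_l. apply Csum_ext. intros j.
    unfold Rdiv. rewrite RtoC_mult. ring.
  - rewrite <- Csum_mult_l. apply Csum_ext_loc. intros j Hj.
    unfold binom_weight, Rdiv. rewrite binom_C, Rinv_mult, !RtoC_mult by lia. ring.
Qed.
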